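(* Let $X\subset\mathbb{R}^n$ be finite, $\epsilon\ge0$, and $\sigma$ a degree-compatible term ordering, and run the ABM algorithm with gradient-weighted normalization (described in the context) on $(X,\epsilon,\sigma)$. Then at every point during the run: (1) no polynomial $h\in\mathrm{Span}(\mathcal{O})$ (for the current set $\mathcal{O}$) with $\|h\|_{\mathrm{gw},X}=1$ is $\epsilon$-approximately vanishing for $X$; (2) each polynomial $g=v_1b+v_2o_1+\cdots+v_{s+1}o_s$ formed in step S3 satisfies $\|g\|_{\mathrm{gw},X}=1$, has nonzero coefficient $v_1$ on $b$, and is $\sqrt{\lambda_{\min}}$-approximately vanishing for $X$, i.e. $\|g(X)\|\le\sqrt{\lambda_{\min}}$.
   Context: For $X=\{\mathbf{x}_1,\ldots,\mathbf{x}_N\}$ and a polynomial $h$, $h(X)=(h(\mathbf{x}_1),\ldots,h(\mathbf{x}_N))^\top$; $\|\cdot\|$ is the Euclidean norm. A polynomial $g$ is $\epsilon$-approximately vanishing for $X$ if $\|g(X)\|\le\epsilon$. Gradient norm: $\|g\|_{g,X}=\sqrt{\sum_{\mathbf{x}\in X}\|\nabla g(\mathbf{x})\|^2}/\sqrt{\sum_{k=1}^n\deg_k(g)^2}$, and $0$ for constant $g$. Gradient-weighted norm of $g=\sum_ic_it_i$ (distinct terms $t_i$): $\|g\|_{\mathrm{gw},X}=\sqrt{\sum_ic_i^2\|t_i\|_{g,X}^2}$; $g$ is gradient-weighted unitary if this equals $1$. $\mathrm{Span}(\cdot)$ is the real linear span. The border of a set of terms $\mathcal{O}$ is $\partial\mathcal{O}=(\bigcup_k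 x_k\mathcal{O})\setminus\mathcal{O}$. ABM algorithm with gradient-weighted normalization, input $(X,\epsilon,\sigma)$: initialize $G=\emptyset$, $\mathcal{O}=\{1\}$. For $d=1,2,\ldots$: set $L=\{b\in\partial\mathcal{O}:\deg b=d\}$; if $L=\emptyset$, output $(\mathcal{O},G)$ and stop. Otherwise repeat until $L$ is empty: (S1) take the $\sigma$-smallest $b\in L$ and remove it from $L$; (S2) with current $\mathcal{O}=\{o_1,\ldots,o_s\}$, let $M=(b(X)\ o_1(X)\ \cdots\ o_s(X))$ and $D=\mathrm{diag}(\|b\|_{\mathrm{gw},X},\|o_1\|_{\mathrm{gw},X},\ldots,\|o_s\|_{\mathrm{gw},X})$, and compute the smallest generalized eigenvalue $\lambda_{\min}$ and a corresponding generalized eigenvector $\mathbf{v}_{\min}=(v_1,\ldots,v_{s+1})^\top$ of $M^\top M\mathbf{v}=\lambda D^2\mathbf{v}$, normalized by $\mathbf{v}_{\min}^\top D^2\mathbf{v}_{\min}=1$; (S3) if $\sqrt{\lambda_{\min}}\le\epsilon$, add $g=v_1b+v_2o_1+\cdots+v_{s+1}o_s$ to $G$; otherwise add $b$ to $\mathcal{O}$. *)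

From HB Require Import structures.
From mathcomp Require Import all_boot all_order all_algebra.
From mathcomp Require Import reals.
From mathcomp Require Import mpoly.


Import Order.TTheory GRing.Theory Num.Theory.
Local Open Scope ring_scope.

Section ABM.
Context {R : realType} {n : nat}.

Local Notation term := 'X_{1..n}.
Local Notation poly := {mpoly R[n]}.
Local Notation point := 'rV[R]_n.

Definition coords (x : point) : 'I_n -> R := fun i => x ord0 i.

Definition evalX (X : seq point) (h : poly) : seq R := [seq h.@[coords x] | x <- X].
Definition eucl_norm (s : seq R) : R := Num.sqrt (\sum_(a <- s) a ^+ 2).

Definition approx_vanishing (X : seq point) (eps : R) (g : poly) : Prop :=
  eucl_norm (evalX X g) <= eps.

Definition degk (k : 'I_n) (g : poly) : nat := (\max_(m <- msupp g) m k)%N.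

Definition grad_sqsum (X : seq point) (g : poly) : R :=
  \sum_(x <- X) \sum_(k < n) (g^`M(k)).@[coords x] ^+ 2.

(* gradient norm ||g||_{g,X}; 0 for constant g (i.e. all deg_k g = 0) *)
Definition grad_norm (X : seq point) (g : poly) : R :=
  let den := (\sum_(k < n) (degk k g) ^ 2)%N in
  if den == 0%N then 0
  else Num.sqrt (grad_sqsum X g) / Num.sqrt (den%:R).

Definition gw_norm (X : seq point) (g : poly) : R :=
  Num.sqrt (\sum_(m <- msupp g) (g@_m) ^+ 2 * (grad_norm X 'X_[m]) ^+ 2).

Definition in_span (O : seq term) (h : poly) : Prop :=
  exists c : term -> R, h = \sum_(t <- O) c t *: 'X_[t].

(* term orderings (on monomials, multiplication of terms = addition of exponents) *)
Definition term_order (le : rel term) : Prop :=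
  [/\ reflexive le, antisymmetric le, transitive le & total le] /\
  (forall m, le 0%MM m) /\
  (forall m1 m2 m3, le m1 m2 -> le (m1 + m3)%MM (m2 + m3)%MM).

Definition degree_compatible (le : rel term) : Prop :=
  forall m1 m2, (mdeg m1 < mdeg m2)%N -> le m1 m2 && (m1 != m2).

(* {b in border(O) : deg b = d}, border(O) = (U_k x_k O) \ O *)
Definition border_deg (O : seq term) (d : nat) : seq term :=
  undup [seq m <- [seq (U_(k) + o)%MM | k <- enum 'I_n, o <- O]
         | (mdeg m == d) && (m \notin O)].

Definition sigma_min (le : rel term) (L : seq term) (b : term) : Prop :=
  b \in L /\ forall t, t \in L -> le b t.

Definition cols (b : term) (O : seq term) (j : nat) : term :=
  nth 0%MM (b :: O) j.

Definition Mmat (X : seq point) (b : term) (O : seq term) : 'M[R]_(size X, (size O).+1) :=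
  \matrix_(i < size X, j < (size O).+1) ('X_[cols b O j] : poly).@[coords (nth 0 X i)].

Definition Dmat (X : seq point) (b : term) (O : seq term) : 'M[R]_((size O).+1) :=
  diag_mx (\row_(j < (size O).+1) gw_norm X 'X_[cols b O j]).

Definition gen_eigpair (X : seq point) (b : term) (O : seq term)
    (lam : R) (v : 'cV[R]_((size O).+1)) : Prop :=
  let M := Mmat X b O in let D := Dmat X b O in
  ((M^T *m M) *m v = lam *: ((D *m D) *m v)) /\ (v^T *m (D *m D) *m v = 1%:M).

Definition S2_result (X : seq point) (b : term) (O : seq term)
    (lam : R) (v : 'cV[R]_((size O).+1)) : Prop :=
  gen_eigpair X b O lam v /\
  forall mu (w : 'cV[R]_((size O).+1)), gen_eigpair X b O mu w -> lam <= mu.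

Definition S3_poly (b : term) (O : seq term) (v : 'cV[R]_((size O).+1)) : poly :=
  \sum_(j < (size O).+1) v j ord0 *: 'X_[cols b O j].

Record abm_state := ABMState {
  st_O : seq term; st_G : seq poly; st_d : nat; st_L : seq term }.

Definition abm_init : abm_state := ABMState [:: 0%MM] [::] 0 [::].

Inductive abm_step (X : seq point) (eps : R) (le : rel term) :
    abm_state -> abm_state -> Prop :=
  | step_next_degree s :
      st_L s = [::] -> border_deg (st_O s) (st_d s).+1 != [::] ->
      abm_step X eps le s
        (ABMState (st_O s) (st_G s) (st_d s).+1 (border_deg (st_O s) (st_d s).+1))
  | step_add_G s b lam v :
      sigma_min le (st_L s) b -> S2_result X b (st_O s) lam v ->
      Num.sqrt lam <= eps ->
      abm_step X eps le s
        (ABMState (st_O s) (rcons (st_G s) (S3_poly b (st_O s) v)) (st_d s) (rem b (st_L s)))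
  | step_add_O s b lam v :
      sigma_min le (st_L s) b -> S2_result X b (st_O s) lam v ->
      eps < Num.sqrt lam ->
      abm_step X eps le s
        (ABMState (rcons (st_O s) b) (st_G s) (st_d s) (rem b (st_L s))).

Inductive abm_reach (X : seq point) (eps : R) (le : rel term) : abm_state -> Prop :=
  | reach_init : abm_reach X eps le abm_init
  | reach_step s s' : abm_reach X eps le s -> abm_step X eps le s s' ->
                      abm_reach X eps le s'.

End ABM.

From HB Require Import structures.
From mathcomp Require Import all_boot all_order all_algebra.
From mathcomp Require Import reals.
From mathcomp Require Import mpoly.
From mathcomp Require Import ring lra zify.
From mathcomp Require Import boolp classical_sets topology normedtype derive.
Set Implicit Arguments.
Unset Strict Implicit.
Unset Printing Implicit Defensive.

Import Order.TTheory GRing.Theory Num.Theory.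
Import numFieldTopology.Exports numFieldNormedType.Exports.
Local Open Scope ring_scope.

(* Write A = M^T M and B = D^2. A polynomial of Span(O, b) is [S3_poly b O w]
   for a coefficient vector w, with gw-norm sqrt(w^T B w) and ||g(X)|| =
   sqrt(w^T A w). The smallest generalised eigenvalue is the minimum of the
   Rayleigh quotient: lam <= w^T A w whenever w^T B w = 1. Hence when b joins O
   (sqrt lam > eps) no unit element of the enlarged span is eps-vanishing, which
   gives (1) as an invariant of the run; in step S3 the eigenvector v has
   v^T B v = 1 and v^T A v = lam, and v_1 = 0 would put an eps-vanishing unit
   polynomial in Span(O), contradicting (1).
   The Rayleigh bound needs a minimiser, and D may be singular (the constant
   term has gradient norm 0): the zero-weight coordinates are eliminated by least
   squares, after which the constraint set is compact. If v attains the minimum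
   l then A - l B is positive semidefinite with v in its kernel, so (l, v) is an
   eigenpair and lam <= l. *)

Section QuadraticForm.
Variable R : realFieldType.

Definition qform {m} (K : 'M[R]_m) (v : 'cV[R]_m) : R := (v^T *m K *m v) 0 0.

Lemma sqnorm_cVE m (x : 'cV[R]_m) : (x^T *m x) 0 0 = \sum_i x i 0 ^+ 2.
Proof. by rewrite mxE; apply: eq_bigr => i _; rewrite mxE expr2. Qed.

Lemma sqnorm_cV_ge0 m (x : 'cV[R]_m) : 0 <= (x^T *m x) 0 0.
Proof. by rewrite sqnorm_cVE; apply: sumr_ge0 => i _; apply: sqr_ge0. Qed.

Lemma sqnorm_cV_eq0 m (x : 'cV[R]_m) : (x^T *m x) 0 0 = 0 -> x = 0.
Proof.
rewrite sqnorm_cVE => /eqP; rewrite psumr_eq0 => [/allP x0|i _]; last exact: sqr_ge0.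
apply/matrixP => i j; rewrite ord1 mxE.
by have /implyP := x0 i (mem_index_enum _); rewrite sqrf_eq0 => /(_ isT)/eqP.
Qed.

Lemma mulmx_trmx_eq0 p q (A : 'M[R]_(p, q)) : A *m A^T = 0 -> A = 0.
Proof.
move=> AAt0; apply/row_matrixP => i; apply: trmx_inj; rewrite row0 trmx0.
apply: sqnorm_cV_eq0; transitivity ((A *m A^T) i i); last by rewrite AAt0 mxE.
by rewrite !mxE; apply: eq_bigr => k _; rewrite !mxE.
Qed.

Lemma submx_gram p q (F : 'M[R]_(p, q)) : (F <= F^T *m F)%MS.
Proof.
rewrite -(mxrank_leqif_sup (submxMl _ _)).2 eqn_leq mxrankS ?submxMl //=.
have : (kermx (F^T *m F) <= kermx F^T)%MS.
  rewrite sub_kermx; apply/eqP/mulmx_trmx_eq0.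
  by rewrite trmx_mul trmxK mulmxA -(mulmxA _ F^T) mulmx_ker mul0mx.
move/mxrankS; rewrite !mxrank_ker mxrank_tr.
have := rank_leq_col F; have := rank_leq_col (F^T *m F).
set rF := \rank F; set rG := \rank (F^T *m F); lia.
Qed.

Lemma sqnorm_cV_orthD m (x y : 'cV[R]_m) : y^T *m x = 0 ->
  ((x + y)^T *m (x + y)) 0 0 = (x^T *m x) 0 0 + (y^T *m y) 0 0.
Proof.
move=> yx0; have xy0 : x^T *m y = 0 by rewrite -[x^T *m y]trmxK trmx_mul trmxK yx0 trmx0.
by rewrite [(x + y)^T]linearD /= mulmxDl !mulmxDr xy0 yx0 addr0 add0r [LHS]mxE.
Qed.

Lemma mulmx_gram_pinv p q (F : 'M[R]_(p, q)) :
  (F^T *m F) *m (pinvmx (F^T *m F))^T *m F^T = F^T.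
Proof.
have FYG := mulmxKpV (submx_gram F).
by rewrite -[in RHS]FYG !trmx_mul !trmxK !mulmxA.
Qed.

Lemma qform_mulmx m (K S : 'M[R]_m) v : qform K (S *m v) = qform (S^T *m K *m S) v.
Proof. by rewrite /qform trmx_mul !mulmxA. Qed.

Lemma qformZ m (K : 'M[R]_m) a v : qform K (a *: v) = a ^+ 2 * qform K v.
Proof. by rewrite /qform linearZ /= [(a *: v)^T]linearZ /= -!scalemxAl scalerA !mxE expr2. Qed.

Lemma qform_mulmx_invariant m (K S : 'M[R]_m) v :
  K^T = K -> K *m S = K -> qform K (S *m v) = qform K v.
Proof. by move=> sK KS; rewrite qform_mulmx -mulmxA KS -{1}sK -trmx_mul KS sK. Qed.

Lemma qform_gramE N m (M : 'M[R]_(N, m)) v : qform (M^T *m M) v = ((M *m v)^T *m (M *m v)) 0 0.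
Proof. by rewrite /qform trmx_mul !mulmxA. Qed.

Lemma qform_gram_ge0 N m (M : 'M[R]_(N, m)) v : 0 <= qform (M^T *m M) v.
Proof. by rewrite qform_gramE sqnorm_cV_ge0. Qed.

Lemma qform_diag2E m (r : 'rV[R]_m) v :
  qform (diag_mx r *m diag_mx r) v = \sum_i (r 0 i * v i 0) ^+ 2.
Proof.
rewrite /qform mulmx_diag -mulmxA mul_diag_mx mxE; apply: eq_bigr => i _.
by rewrite !mxE; ring.
Qed.

Lemma qform_diag2_ge0 m (r : 'rV[R]_m) v : 0 <= qform (diag_mx r *m diag_mx r) v.
Proof. by rewrite qform_diag2E; apply: sumr_ge0 => i _; apply: sqr_ge0. Qed.

Lemma qformDZ m (K : 'M[R]_m) v z t : K^T = K ->
  qform K (v + t *: z) = qform K v + 2 * t * (z^T *m K *m v) 0 0 + t ^+ 2 * qform K z.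
Proof.
move=> sK; have vKz : (v^T *m K *m z) 0 0 = (z^T *m K *m v) 0 0.
  have -> : v^T *m K *m z = (z^T *m K *m v)^T by rewrite !trmx_mul trmxK sK mulmxA.
  by rewrite [LHS]mxE.
rewrite /qform [(v + _)^T]linearD /= [(_ *: z)^T]linearZ /= !mulmxDl !mulmxDr.
rewrite -!scalemxAl -!scalemxAr; move: vKz.
set a := v^T *m K *m v; set b := v^T *m K *m z; set c := z^T *m K *m v; set d := z^T *m K *m z.
by rewrite !mxE => ->; ring.
Qed.

Lemma psd_qform_eq0 m (K : 'M[R]_m) v : K^T = K -> (forall w, 0 <= qform K w) ->
  qform K v = 0 -> K *m v = 0.
Proof.
move=> sK psdK Kv0; set z := K *m v; set a := (z^T *m z) 0 0.
suff : a = 0 by apply: sqnorm_cV_eq0.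
have zKz_ge0 := psdK z; set c := qform K z in zKz_ge0.
pose t := - a / (c + 1).
have a_t : a = - t * (c + 1) by rewrite /t; field; rewrite gt_eqF // ltr_wpDl.
have := psdK (v + t *: z); rewrite qformDZ // Kv0 -mulmxA -/a -/c a_t.
nra.
Qed.

Definition supp_proj m (r : 'rV[R]_m) : 'M[R]_m := diag_mx (\row_i (r 0 i != 0)%:R).

Section LeastSquaresCompletion.
Variables (N m : nat) (M : 'M[R]_(N, m)) (r : 'rV[R]_m).
Local Notation B := (diag_mx r *m diag_mx r).
Local Notation P := (supp_proj r).
Let E := 1%:M - P.
Let F := M *m E.
Let Y := (pinvmx (F^T *m F))^T.

(* [lsq_completion *m v] keeps the coordinates of [v] of nonzero weight and
   chooses the others, by least squares, so as to minimise [|M *m _|]. *)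
Definition lsq_completion : 'M[R]_m := P - E *m Y *m F^T *m M *m P.

Lemma supp_projE (w : 'cV[R]_m) i : (P *m w) i 0 = (r 0 i != 0)%:R * w i 0.
Proof. by rewrite mul_diag_mx !mxE. Qed.

Lemma supp_proj_idem : P *m P = P.
Proof.
rewrite mulmx_diag; congr diag_mx; apply/rowP => i; rewrite !mxE.
by case: (r 0 i != 0); rewrite ?mulr1 ?mulr0.
Qed.

Lemma diag2_supp_proj : B *m P = B.
Proof.
rewrite !mulmx_diag; congr diag_mx; apply/rowP => i; rewrite !mxE.
by case: eqP => [->|_]; rewrite ?mulr0 ?mul0r ?mulr1.
Qed.

Lemma lsq_completion_supp_proj : lsq_completion *m P = lsq_completion.
Proof. by rewrite /lsq_completion mulmxBl -!mulmxA supp_proj_idem. Qed.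

Lemma qform_lsq_completion_diag2 v : qform B (lsq_completion *m v) = qform B v.
Proof.
apply: qform_mulmx_invariant; first by rewrite trmx_mul !tr_diag_mx.
have BE : B *m E = 0 by rewrite /E mulmxBr mulmx1 diag2_supp_proj subrr.
by rewrite /lsq_completion mulmxBr diag2_supp_proj !mulmxA BE !mul0mx subr0.
Qed.

Lemma qform_lsq_completion_le v :
  qform (M^T *m M) (lsq_completion *m v) <= qform (M^T *m M) v.
Proof.
set p := P *m v; set y := Y *m F^T *m M *m p; set r0 := M *m p - F *m y.
have Mv : M *m v = r0 + F *m (v + y).
  by rewrite /r0 mulmxDr addrA addrAC subrK /F -mulmxA -mulmxDr /p /E -mulmxDl subrKC mul1mx.
have Ft_r0 : F^T *m r0 = 0.
  rewrite /r0 /y mulmxBr (mulmxA F^T F) !(mulmxA (F^T *m F)) mulmx_gram_pinv.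
  by rewrite (mulmxA F^T M) subrr.
have M_Phi_v : M *m (lsq_completion *m v) = r0.
  by rewrite /r0 /y /p /lsq_completion mulmxBl mulmxBr /F !mulmxA.
rewrite !qform_gramE M_Phi_v Mv (@sqnorm_cV_orthD _ r0) ?lerDl ?sqnorm_cV_ge0 //.
by rewrite trmx_mul -mulmxA Ft_r0 mulmx0.
Qed.

End LeastSquaresCompletion.
End QuadraticForm.

Lemma qform_min_gen_eigenvector (R : rcfType) m (A B : 'M[R]_m) v :
  A^T = A -> B^T = B -> (forall w, 0 <= qform A w) -> (forall w, 0 <= qform B w) ->
  qform B v = 1 -> (forall w, qform B w = 1 -> qform A v <= qform A w) ->
  A *m v = qform A v *: (B *m v).
Proof.
move=> sA sB psdA psdB Bv v_min; set l := qform A v; set C := A - l *: B.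
have qformC w : qform C w = qform A w - l * qform B w.
  by rewrite /qform /C mulmxBr mulmxBl -scalemxAr -scalemxAl !mxE.
have psdC w : 0 <= qform C w.
  rewrite qformC subr_ge0; have [Bw0|Bw_gt0] := eqVneq (qform B w) 0.
    by rewrite Bw0 mulr0 psdA.
  have {}Bw_gt0 : 0 < qform B w by rewrite lt_def Bw_gt0 psdB.
  have := v_min ((Num.sqrt (qform B w))^-1 *: w).
  rewrite !qformZ exprVn sqr_sqrtr ?(ltW Bw_gt0) // mulVf ?gt_eqF // => /(_ erefl).
  by rewrite mulrC ler_pdivlMr.
have : C *m v = 0.
  apply: psd_qform_eq0 => //; last by rewrite qformC Bv mulr1 subrr.
  by rewrite /C linearB /= linearZ /= sA sB.
by move/eqP; rewrite mulmxBl -scalemxAl subr_eq0 => /eqP.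
Qed.

Lemma sqrM_le1_norm (R : realFieldType) (a b : R) : a != 0 -> (a * b) ^+ 2 <= 1 ->
  `|b| <= `|a|^-1.
Proof.
move=> a0 ab1; have a_gt0 : 0 < `|a| by rewrite normr_gt0.
rewrite -(ler_pM2l a_gt0) mulfV ?gt_eqF // -normrM.
by rewrite -(expr_le1 (n := 2)) // real_normK ?num_real.
Qed.

Section RayleighQuotient.
Variable R : realType.
Local Open Scope classical_set_scope.

Lemma qform_continuous m (K : 'M[R]_m) : continuous (fun x : 'rV[R]_m => qform K x^T).
Proof.
have sumC (F : 'I_m -> 'rV[R]_m -> R) :
    (forall i, continuous (F i)) -> continuous (fun x => \sum_i F i x).
  by move=> FC; apply: continuous_big => [|i _]; [exact: add_continuous | exact: FC].
have coordC i : continuous (fun x : 'rV[R]_m => x 0 i) := @coord_continuous R 1 m 0 i.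
have -> : (fun x : 'rV[R]_m => qform K x^T) =
    (fun x => \sum_j (\sum_i x 0 i * K i j) * x 0 j).
  by apply/funext => x; rewrite /qform trmxK !mxE; under eq_bigr do rewrite !mxE.
apply: (sumC) => j x; apply: continuousM (coordC j x).
by apply: sumC => i y; apply: continuousM (coordC i y) _; exact: cst_continuous.
Qed.

Lemma exists_qform_min N m (M : 'M[R]_(N, m)) (r : 'rV[R]_m) (u : 'cV[R]_m) :
  qform (diag_mx r *m diag_mx r) u = 1 ->
  exists2 v, qform (diag_mx r *m diag_mx r) v = 1 &
    forall w, qform (diag_mx r *m diag_mx r) w = 1 ->
      qform (M^T *m M) v <= qform (M^T *m M) w.
Proof.
set A := M^T *m M; set B := diag_mx r *m diag_mx r => Bu.
set P := supp_proj r; set Phi := lsq_completion M r.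
(* [P] maps the unit sphere [S] of [B] into [Box], since there a coordinate of
   nonzero weight [r 0 i] is bounded by [|r 0 i|^-1]. *)
pose c i : R := if r 0 i == 0 then 0 else `|r 0 i|^-1.
pose Box := [set x : 'rV[R]_m | forall i, `[- c i, c i]%classic (x 0 i)].
pose S := [set x : 'rV[R]_m | qform B x^T = 1].
have K_compact : compact (Box `&` S).
  apply: compact_closedI.
    by apply: (@rV_compact _ _ (fun i => `[- c i, c i]%classic)) => i; exact: segment_compact.
  have -> : S = (fun x : 'rV[R]_m => qform B x^T) @^-1` [set y | y = 1] by [].
  by apply: preimage_closed; [move=> x _; exact: qform_continuous | exact: closed_eq].
have P_K w : qform B w = 1 -> (Box `&` S) (P *m w)^T.
  move=> Bw; split; last first.
    by rewrite /S /= trmxK qform_mulmx_invariant ?diag2_supp_proj // trmx_mul !tr_diag_mx.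
  move=> i /=; rewrite in_itv /= -ler_norml mxE supp_projE /c.
  case: eqP => [_|/eqP ri0]; first by rewrite mul0r normr0.
  rewrite mul1r sqrM_le1_norm // -Bw qform_diag2E (bigD1 i) //= lerDl.
  by apply: sumr_ge0 => k _; apply: sqr_ge0.
have Phi_cont : {within Box `&` S, continuous (fun x => qform A (Phi *m x^T))}.
  apply: continuous_subspaceT; under eq_fun do rewrite qform_mulmx.
  exact: qform_continuous.
have [x0 K_x0 x0_min] := EVT_min_rV (ex_intro _ _ (P_K u Bu)) K_compact Phi_cont.
exists (Phi *m x0^T).
  by rewrite qform_lsq_completion_diag2; rewrite inE in K_x0; case: K_x0.
move=> w Bw; apply: le_trans (qform_lsq_completion_le M r w).
by have := x0_min _ (mem_set (P_K w Bw)); rewrite /= trmxK mulmxA lsq_completion_supp_proj.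
Qed.

Lemma gen_eigenvalue_min_le_qform N m (M : 'M[R]_(N, m)) (r : 'rV[R]_m) (lam : R) :
  (forall mu w, M^T *m M *m w = mu *: (diag_mx r *m diag_mx r *m w) ->
     qform (diag_mx r *m diag_mx r) w = 1 -> lam <= mu) ->
  forall u, qform (diag_mx r *m diag_mx r) u = 1 -> lam <= qform (M^T *m M) u.
Proof.
set A := M^T *m M; set B := diag_mx r *m diag_mx r => lam_min u Bu.
have [v Bv v_min] := exists_qform_min M Bu.
apply: le_trans (v_min u Bu); apply: lam_min (Bv).
apply: qform_min_gen_eigenvector v_min => //.
- by rewrite /A trmx_mul trmxK.
- by rewrite /B trmx_mul tr_diag_mx.
- exact: qform_gram_ge0.
- exact: qform_diag2_ge0.
Qed.

End RayleighQuotient.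

Lemma sum_uniq_subset (V : nmodType) (I : eqType) (s1 s2 : seq I) (F : I -> V) :
  uniq s1 -> uniq s2 -> {subset s1 <= s2} -> {in s2, forall i, i \notin s1 -> F i = 0} ->
  \sum_(i <- s1) F i = \sum_(i <- s2) F i.
Proof.
move=> u1 u2 s12 F0; rewrite [RHS](bigID (mem s1)) /= [X in _ + X]big1_seq ?addr0.
  rewrite -[RHS]big_filter; apply: perm_big; apply: uniq_perm; rewrite ?filter_uniq //.
  by move=> i; rewrite mem_filter; case: (boolP (i \in s1)) => // /s12 ->.
by move=> i /andP [i_s1 i_s2]; apply: F0.
Qed.

Lemma mcoeff_sum_scaleX (R : nzRingType) n (s : seq 'X_{1..n}) (c : 'X_{1..n} -> R) m :
  uniq s -> (\sum_(t <- s) c t *: 'X_[t] : {mpoly R[n]})@_m = if m \in s then c m else 0.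
Proof.
move=> us; rewrite raddf_sum /=; under eq_bigr do rewrite mcoeffZ mcoeffX.
case: ifP => ms.
  rewrite (bigD1_seq m) //= eqxx mulr1 big1 ?addr0 // => t /negbTE ->.
  by rewrite mulr0.
rewrite big1_seq // => t /andP [_ ts]; case: eqP => [tm|_]; last by rewrite mulr0.
by rewrite -tm ts in ms.
Qed.

Section GradientWeightedNorm.
Variables (R : realType) (n : nat) (X : seq 'rV[R]_n).
Local Notation term := 'X_{1..n}.
Local Notation poly := {mpoly R[n]}.
Local Notation MtM b O := ((Mmat X b O)^T *m Mmat X b O).
Local Notation D2 b O := (Dmat X b O *m Dmat X b O).

Lemma grad_norm_ge0 (g : poly) : 0 <= grad_norm X g.
Proof. by rewrite /grad_norm; case: ifP => // _; apply: divr_ge0; apply: sqrtr_ge0. Qed.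

Lemma grad_norm1 : grad_norm X ('X_[0%MM] : poly) = 0.
Proof. by rewrite /grad_norm big1 // => k _; rewrite /degk msuppX big_seq1 mnm0E. Qed.

Lemma gw_normX t : gw_norm X ('X_[t] : poly) = grad_norm X 'X_[t].
Proof.
rewrite /gw_norm msuppX big_seq1 mcoeffX eqxx expr1n mul1r sqrtr_sqr.
by rewrite ger0_norm // grad_norm_ge0.
Qed.

Lemma gw_norm_span (s : seq term) (c : term -> R) : uniq s ->
  gw_norm X (\sum_(t <- s) c t *: 'X_[t]) =
  Num.sqrt (\sum_(t <- s) c t ^+ 2 * grad_norm X 'X_[t] ^+ 2).
Proof.
move=> us; rewrite /gw_norm; congr Num.sqrt.
rewrite (@sum_uniq_subset _ _ _ s) ?msupp_uniq //.
- by apply: eq_big_seq => t ts; rewrite mcoeff_sum_scaleX // ts.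
- by move=> m; rewrite mcoeff_msupp mcoeff_sum_scaleX //; case: ifP => //; rewrite eqxx.
- move=> m ms; rewrite mcoeff_msupp negbK mcoeff_sum_scaleX // ms => /eqP ->.
  by rewrite expr0n mul0r.
Qed.

Lemma S3_polyE b (O : seq term) (w : 'cV[R]_(size O).+1) : uniq (b :: O) ->
  S3_poly b O w = \sum_(t <- b :: O) w (inord (index t (b :: O))) 0 *: 'X_[t].
Proof.
move=> ubO; rewrite (big_nth 0%MM) big_mkord; apply: eq_bigr => j _.
by rewrite index_uniq // inord_val.
Qed.

Lemma gw_norm_S3 b (O : seq term) (w : 'cV[R]_(size O).+1) : uniq (b :: O) ->
  gw_norm X (S3_poly b O w) = Num.sqrt (qform (D2 b O) w).
Proof.
move=> ubO; rewrite S3_polyE // gw_norm_span // (big_nth 0%MM) big_mkord qform_diag2E.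
congr Num.sqrt; apply: eq_bigr => j _.
by rewrite index_uniq // inord_val !mxE gw_normX exprMn mulrC.
Qed.

Lemma eucl_norm_S3 b (O : seq term) (w : 'cV[R]_(size O).+1) :
  eucl_norm (evalX X (S3_poly b O w)) = Num.sqrt (qform (MtM b O) w).
Proof.
rewrite /eucl_norm /evalX big_map qform_gramE sqnorm_cVE (big_nth 0) big_mkord.
congr Num.sqrt; apply: eq_bigr => i _; rewrite !mxE; congr (_ ^+ 2).
rewrite /S3_poly raddf_sum /=; apply: eq_bigr => j _.
by rewrite mevalZ !mxE mulrC.
Qed.

Lemma gen_eigpairP b (O : seq term) lam (v : 'cV[R]_(size O).+1) :
  gen_eigpair X b O lam v <-> MtM b O *m v = lam *: (D2 b O *m v) /\ qform (D2 b O) v = 1.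
Proof.
split=> [[eig vBv] | [eig Bv]]; split=> //; first by rewrite /qform vBv mxE.
by apply/matrixP => i j; rewrite !ord1 [RHS]mxE.
Qed.

Lemma S2_result_qform b (O : seq term) lam (v : 'cV[R]_(size O).+1) :
  S2_result X b O lam v -> [/\ qform (D2 b O) v = 1, qform (MtM b O) v = lam &
    forall w, qform (D2 b O) w = 1 -> lam <= qform (MtM b O) w].
Proof.
move=> [/gen_eigpairP [eig Bv] lam_min]; split=> //.
  by rewrite -[RHS]mulr1 -Bv /qform -(mulmxA v^T) eig -scalemxAr mxE mulmxA.
apply: (@gen_eigenvalue_min_le_qform _ _ _ _ (\row_j gw_norm X 'X_[cols b O j])).
by move=> mu w eig_w Bw; apply: (lam_min mu w); apply/gen_eigpairP.
Qed.

Lemma S3_poly_in_span b (O : seq term) (v : 'cV[R]_(size O).+1) :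
  uniq (b :: O) -> v ord0 ord0 = 0 -> in_span O (S3_poly b O v).
Proof.
move=> ubO v0; exists (fun t => v (inord (index t (b :: O))) 0).
rewrite S3_polyE // big_cons /= eqxx.
by rewrite (_ : inord 0 = ord0) ?v0 ?scale0r ?add0r //; apply: val_inj; rewrite /= inordK.
Qed.

Lemma in_span_rcons b (O : seq term) (h : poly) :
  in_span (rcons O b) h -> exists w : 'cV[R]_(size O).+1, h = S3_poly b O w.
Proof.
move=> [c ->]; exists (\col_j c (cols b O j)).
rewrite (perm_big (b :: O)) ?perm_rcons ?perm_refl // (big_nth 0%MM) big_mkord.
by apply: eq_bigr => j _; rewrite mxE.
Qed.

End GradientWeightedNorm.

Section Run.
Variables (R : realType) (n : nat) (X : seq 'rV[R]_n) (eps : R) (sigma : rel 'X_{1..n}).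
Local Notation term := 'X_{1..n}.

Definition span_not_vanishing (O : seq term) : Prop :=
  forall h, in_span O h -> gw_norm X h = 1 -> ~ approx_vanishing X eps h.

Lemma span_not_vanishing1 : span_not_vanishing [:: 0%MM].
Proof.
move=> h [c ->]; rewrite gw_norm_span // big_seq1 grad_norm1 expr0n mulr0 sqrtr0.
by move/eqP; rewrite eq_sym oner_eq0.
Qed.

Lemma span_not_vanishing_rcons b (O : seq term) lam v :
  uniq (b :: O) -> S2_result X b O lam v -> eps < Num.sqrt lam ->
  span_not_vanishing (rcons O b).
Proof.
move=> ubO /S2_result_qform [_ _ lam_min] eps_lam h /in_span_rcons [w ->].
rewrite gw_norm_S3 // /approx_vanishing eucl_norm_S3 => Bw.
have {}Bw : qform (Dmat X b O *m Dmat X b O) w = 1.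
  by rewrite -(sqr_sqrtr (qform_diag2_ge0 _ w)) Bw expr1n.
by have := ler_wsqrtr (lam_min w Bw); lra.
Qed.

Definition abm_invariant (s : @abm_state R n) : Prop :=
  [/\ uniq (st_O s), uniq (st_L s), {in st_L s, forall t, t \notin st_O s}
    & span_not_vanishing (st_O s)].

Lemma abm_step_invariant s s' :
  abm_step X eps sigma s s' -> abm_invariant s -> abm_invariant s'.
Proof.
case=> [s1 _ _ | s1 b lam v [bL _] _ _ | s1 b lam v [bL _] S2 eps_lam] [uO uL LO nvO].
- split=> //=; first exact: undup_uniq.
  by move=> t; rewrite mem_undup mem_filter => /andP [/andP [_ ->]].
- by split=> //=; [exact: rem_uniq | move=> t /mem_rem; exact: LO].
- have bO := LO _ bL; split=> /=.
  + by rewrite rcons_uniq bO uO.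
  + exact: rem_uniq.
  + move=> t; rewrite mem_rem_uniq // => /andP [tb tL].
    by rewrite mem_rcons in_cons negb_or tb LO.
  + by apply: span_not_vanishing_rcons S2 eps_lam; rewrite /= bO.
Qed.

Lemma abm_reach_invariant s : abm_reach X eps sigma s -> abm_invariant s.
Proof.
elim=> [|s1 s2 _ inv1 step]; last exact: abm_step_invariant step inv1.
by split=> //; exact: span_not_vanishing1.
Qed.

End Run.

Theorem mainTheorem3 (R : realType) (n : nat) (X : seq 'rV[R]_n) (eps : R)
    (sigma : rel 'X_{1..n}) :
  uniq X -> 0 <= eps -> term_order sigma -> degree_compatible sigma ->
  forall s : @abm_state R n, abm_reach X eps sigma s ->
    (forall h : {mpoly R[n]}, in_span (st_O s) h -> gw_norm X h = 1 ->
       ~ approx_vanishing X eps h) /\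
    (forall (b : 'X_{1..n}) (lam : R) (v : 'cV[R]_((size (st_O s)).+1)),
       sigma_min sigma (st_L s) b -> S2_result X b (st_O s) lam v ->
       Num.sqrt lam <= eps ->
       [/\ gw_norm X (S3_poly b (st_O s) v) = 1,
           v ord0 ord0 != 0 &
           approx_vanishing X (Num.sqrt lam) (S3_poly b (st_O s) v)]).
Proof.
move=> _ _ _ _ s /abm_reach_invariant [uO _ LO nvO]; split=> // b lam v [bL _] S2 lam_eps.
have ubO : uniq (b :: st_O s) by rewrite /= LO.
have [Bv Av _] := S2_result_qform S2.
have gw1 : gw_norm X (S3_poly b (st_O s) v) = 1 by rewrite gw_norm_S3 // Bv sqrtr1.
have van : approx_vanishing X (Num.sqrt lam) (S3_poly b (st_O s) v).
  by rewrite /approx_vanishing eucl_norm_S3 Av.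
split=> //; apply/eqP => v0.
exact: nvO (S3_poly_in_span ubO v0) gw1 (le_trans van lam_eps).
Qed.
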